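(* Let $Q$ be a sequence, $G=(V,E,\delta)$ a pangenome graph, $k_1,k_2>0$ integers, and $H_{gap}$ the directed graph defined in the context. If $v_{(i_0,u_0,f_0)},\dots,v_{(i_k,u_k,f_k)}$ is a directed path in $H_{gap}$, then $Q_{i_0}Q_{i_1}\cdots Q_{i_k}$ is a $(k_1,k_2)$-gap common subsequence between $Q$ and $G$.
   Context: Strings are 0-indexed; $S_i$ is the character of $S$ at position $i$. A pangenome graph is a triple $G=(V,E,\delta)$ where $(V,E)$ is a finite directed graph and $\delta:V\to\Sigma^*\setminus\{\epsilon\}$ assigns to each vertex a nonempty string over an alphabet $\Sigma$. A path in $G$ is a sequence of vertices $P=w_0,\dots,w_k$ ($k\ge0$) with $(w_j,w_{j+1})\in E$ for $j<k$; $spell(P)=\delta(w_0)\cdots\delta(w_k)$. A sequence $S$ is a $(k_1,k_2)$-gap common subsequence between $Q$ and $G$ if there is a path $P$ in $G$ and indices $p_0<\dots<p_{|S|-1}$ in $Q$ and $q_0<\dots<q_{|S|-1}$ in $spell(P)$ with $Q_{p_j}=spell(P)_{q_j}=S_j$ for all $j$, $p_j-p_{j-1}\le k_1$ and $q_j-q_{j-1}\le k_2$ for all $1\le j\le|S|-1$. The directed graph $H_{gap}$ has vertex set $\{v_{(i,u,f)}: 0\le i\le|Q|-1,\ u\in V,\ 0\le f\le|\delta(u)|-1,\ Q_i=\delta(u)_f\}$, and an edge from $v_{(i,u,f)}$ to $v_{(i',u',f')}$ if and only if $0<i'-i\le k_1$ and: if $u\ne u'$, there is a path $P=w_0,\dots,w_k$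 from $u=w_0$ to $u'=w_k$ in $G$ with $0<\sum_{j=0}^{k-1}|\delta(w_j)|+f'-f\le k_2$; if $u=u'$, then $0<f'-f\le k_2$. *)

From mathcomp Require Import all_boot.
Set Implicit Arguments. Unset Strict Implicit. Unset Printing Implicit Defensive.

Definition at_ {T : Type} (s : seq T) (i : nat) : option T := nth None (map Some s) i.

Record pangenome (Sigma : eqType) := Pangenome {
  pg_V :> finType;
  pg_E : rel pg_V;
  pg_delta : pg_V -> seq Sigma;
  pg_delta_nonempty : forall v, pg_delta v != [::] }.

Section Defs.
Variables (Sigma : eqType) (G : pangenome Sigma).

Definition spell (P : seq G) : seq Sigma := flatten (map (@pg_delta _ G) P).

Definition gpath (w0 : G) (ws : seq G) : bool := path (@pg_E _ G) w0 ws.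

Definition gap_common_subseq (k1 k2 : nat) (Q S : seq Sigma) : Prop :=
  exists (w0 : G) (ws : seq G) (ps qs : seq nat),
    [/\ gpath w0 ws,
        size ps = size S /\ size qs = size S,
        sorted ltn ps /\ sorted ltn qs,
        (forall j, j < size S ->
            at_ Q (nth 0 ps j) = at_ S j /\ at_ (spell (w0 :: ws)) (nth 0 qs j) = at_ S j)
      & (forall j, 0 < j < size S ->
            nth 0 ps j - nth 0 ps j.-1 <= k1 /\ nth 0 qs j - nth 0 qs j.-1 <= k2)].

Definition Hvertex (Q : seq Sigma) (x : nat * G * nat) : Prop :=
  let: (i, u, f) := x in
  [/\ i < size Q, f < size (pg_delta u) & at_ Q i = at_ (pg_delta u) f].

Definition Hedge (k1 k2 : nat) (x y : nat * G * nat) : Prop :=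
  let: (i, u, f) := x in
  let: (i', u', f') := y in
  0 < i' - i <= k1 /\
  (if u != u' then
     exists ws : seq G, [/\ gpath u ws, last u ws = u' &
        let s := sumn (map (fun w => size (pg_delta w)) (belast u ws)) in
        f < s + f' /\ s + f' - f <= k2]
   else 0 < f' - f <= k2).

Definition Hpath (Q : seq Sigma) (k1 k2 : nat) (x0 : nat * G * nat) (xs : seq (nat * G * nat)) : Prop :=
  (forall x, x \in x0 :: xs -> Hvertex Q x) /\
  (forall j, j < size xs -> Hedge k1 k2 (nth x0 (x0 :: xs) j) (nth x0 (x0 :: xs) j.+1)).

End Defs.

(** Consecutive vertices of an H_gap path lie either in the same node of G
    or in two nodes joined by a path of G, and concatenating these joining
    paths gives a single path P of G.  Shifting each offset f by the length
    of the part of spell(P) read before its node turns the offsets into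
    positions of spell(P) that increase by at most k2 per step, while the
    query indices increase by at most k1 by definition of the edges. *)
From mathcomp Require Import all_boot.
From mathcomp Require Import zify.

Set Implicit Arguments.
Unset Strict Implicit.
Unset Printing Implicit Defensive.

Definition gap_step (k a b : nat) : bool := a < b <= a + k.

Lemma sorted_gap_step k (s : seq nat) : sorted (gap_step k) s ->
  sorted ltn s /\ (forall j, 0 < j < size s -> nth 0 s j - nth 0 s j.-1 <= k).
Proof.
move=> gap_s; split.
  by apply: sub_sorted gap_s => a b /andP[].
case: s gap_s => [// _ [|j] //|a s /(pathP 0) gap_s [|j] //= lt_j].
by have := gap_s j lt_j; rewrite /gap_step; lia.
Qed.

Lemma isSome_at {T : Type} (s : seq T) i : isSome (at_ s i) = (i < size s).
Proof. by rewrite /at_; elim: s i => [|x s IH] [|i] //=. Qed.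

Lemma at_catl {T : Type} (s t : seq T) i : i < size s -> at_ (s ++ t) i = at_ s i.
Proof. by move=> lt_i_s; rewrite /at_ map_cat nth_cat size_map lt_i_s. Qed.

Lemma at_catr {T : Type} (s t : seq T) i : at_ (s ++ t) (size s + i) = at_ t i.
Proof. by rewrite /at_ map_cat nth_cat size_map ltnNge leq_addr addKn. Qed.

Lemma map_Some_pmap {T U : Type} (f : T -> option U) (s : seq T) :
  all f s -> map Some (pmap f s) = map f s.
Proof. by move=> /all_filterP f_s; rewrite pmapS_filter f_s. Qed.

Section GapPaths.
Variables (Sigma : eqType) (G : pangenome Sigma) (Q : seq Sigma) (k1 k2 : nat).

Lemma spell_cat (P P' : seq G) : spell (P ++ P') = spell P ++ spell P'.
Proof. by rewrite /spell map_cat flatten_cat. Qed.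

Lemma size_spell (P : seq G) : size (spell P) = sumn (map (fun w => size (pg_delta w)) P).
Proof. by rewrite /spell size_flatten /shape -map_comp. Qed.

Lemma Hpath_cons (x0 x1 : nat * G * nat) xs : Hpath Q k1 k2 x0 (x1 :: xs) ->
  [/\ Hvertex Q x0, Hedge k1 k2 x0 x1 & Hpath Q k1 k2 x1 xs].
Proof.
case=> vertices edges; split.
- exact/vertices/mem_head.
- exact: edges 0 _.
- split=> [x x_in|j lt_j_xs]; first by apply: vertices; rewrite inE x_in orbT.
  by have := edges j.+1 lt_j_xs; rewrite /= !(set_nth_default x0 x1) //= ltnW.
Qed.

(* An edge inside a single node is a hop along the trivial path [::]. *)
Lemma Hedge_hop i (u : G) f i' u' f' : Hedge k1 k2 (i, u, f) (i', u', f') ->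
  gap_step k1 i i' /\
  exists ws : seq G, [/\ gpath u ws, last u ws = u' &
    gap_step k2 f (size (spell (belast u ws)) + f')].
Proof.
rewrite /Hedge /gap_step; case: eqP => [<-|_] /= [step_i step_f].
  by split; [lia | exists [::]; split => //=; rewrite /spell /=; lia].
split; first lia.
by case: step_f => ws [path_ws last_ws]; exists ws; split=> //; rewrite size_spell; lia.
Qed.

Lemma Hpath_query_gaps (x0 : nat * G * nat) xs : Hpath Q k1 k2 x0 xs ->
  sorted (gap_step k1) (map (fun x => x.1.1) (x0 :: xs)).
Proof.
elim: xs x0 => [|[[i1 u1] f1] xs IH] [[i0 u0] f0] //=.
case/Hpath_cons=> _ /Hedge_hop[step_i _] rest.
by rewrite step_i; apply: IH rest.
Qed.

Lemma Hvertex_label (P : seq G) i u f :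
  Hvertex Q (i, u, f) -> at_ (spell (u :: P)) f = at_ Q i.
Proof. by case=> _ lt_f eq_label; rewrite [spell _]/= at_catl. Qed.

Lemma Hpath_spelling (x0 : nat * G * nat) xs : Hpath Q k1 k2 x0 xs ->
  exists (ws : seq G) (qs : seq nat),
    [/\ gpath x0.1.2 ws, sorted (gap_step k2) (x0.2 :: qs)
      & map (at_ (spell (x0.1.2 :: ws))) (x0.2 :: qs) = map (fun x => at_ Q x.1.1) (x0 :: xs)].
Proof.
elim: xs x0 => [|[[i1 u1] f1] xs IH] [[i0 u0] f0] /=.
  case=> /(_ _ (mem_head _ _)) vertex0 _.
  by exists [::], [::]; rewrite /= (Hvertex_label _ vertex0).
case/Hpath_cons=> vertex0 /Hedge_hop[_ [ws1 [path_ws1 last_ws1 step_f]]] /IH[ws [qs]] /=.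
set s := size (spell (belast u0 ws1)) in step_f *.
move=> [path_ws gap_qs spell_qs].
exists (ws1 ++ ws), (map (addn s) (f1 :: qs)); split.
- by move: path_ws1 path_ws; rewrite /gpath cat_path last_ws1 => -> ->.
- rewrite /= step_f; apply: homo_path gap_qs => a b; rewrite /gap_step; lia.
rewrite map_cons (Hvertex_label _ vertex0); congr (_ :: _).
have -> : spell (u0 :: ws1 ++ ws) = spell (belast u0 ws1) ++ spell (u1 :: ws).
  by rewrite -cat_cons lastI cat_rcons last_ws1 spell_cat.
rewrite -spell_qs /= at_catr -map_comp; congr (_ :: _).
by apply: eq_map => q /=; rewrite at_catr.
Qed.

End GapPaths.

Theorem lemma6 (Sigma : eqType) (G : pangenome Sigma) (Q : seq Sigma) (k1 k2 : nat)
  (hk1 : 0 < k1) (hk2 : 0 < k2)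
  (x0 : nat * G * nat) (xs : seq (nat * G * nat)) :
  Hpath Q k1 k2 x0 xs ->
  gap_common_subseq G k1 k2 Q (pmap (fun x => at_ Q x.1.1) (x0 :: xs)).
Proof.
move=> H_path; set S := pmap _ _.
have [ws [qs [path_ws gap_qs spellE]]] := Hpath_spelling H_path.
have [sorted_ps gap_ps] := sorted_gap_step (Hpath_query_gaps H_path).
have [sorted_qs gap_qs'] := sorted_gap_step gap_qs.
have SE : map Some S = map (fun x => at_ Q x.1.1) (x0 :: xs).
  apply/map_Some_pmap/allP => -[[i u] f] /H_path.1[lt_i _ _] /=.
  by rewrite isSome_at.
have size_S : size S = size (x0 :: xs) by rewrite -(size_map Some) SE size_map.
have size_qs : size (x0.2 :: qs) = size (x0 :: xs).
  by rewrite -(size_map (at_ (spell (x0.1.2 :: ws)))) spellE size_map.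
exists x0.1.2, ws, (map (fun x => x.1.1) (x0 :: xs)), (x0.2 :: qs).
rewrite size_map size_qs size_S; split=> // [j lt_j|j /andP[j_gt0 lt_j]].
  have -> : at_ S j = at_ Q (nth x0 (x0 :: xs) j).1.1 by rewrite /at_ SE (nth_map x0).
  rewrite (nth_map x0) //; split=> //.
  by rewrite -(nth_map 0 None (at_ _)) ?size_qs // spellE (nth_map x0).
by split; [apply: gap_ps | apply: gap_qs']; rewrite ?size_map ?size_qs j_gt0.
Qed.
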